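(* Let $D\ge 1$ and $k\ge 0$ be integers, let $\mathbf{X}\in\mathbb{C}^{D\times m}$ be a snapshot matrix (whose columns are the state vectors $\mathbf{x}_0,\dots,\mathbf{x}_{m-1}\in\mathbb{C}^D$) with full singular value decomposition $\mathbf{X}=\mathbf{U}\boldsymbol{\Sigma}\mathbf{V}^*$, where $\mathbf{U}\in\mathbb{C}^{D\times D}$ is unitary. Let $\boldsymbol{\Omega}_0^{(x)},\dots,\boldsymbol{\Omega}_k^{(x)}\in\mathbb{C}^{D\times D}$ be arbitrary matrices and define $\boldsymbol{\Omega}_i^{(g)}=\mathbf{U}^*\boldsymbol{\Omega}_i^{(x)}\mathbf{U}$ for $i=0,\dots,k$. Define the $(k+1)D\times(k+1)D$ block companion matrices $$\mathbf{C}_x=\begin{bmatrix}\boldsymbol{\Omega}_0^{(x)} & \boldsymbol{\Omega}_1^{(x)} & \cdots & \boldsymbol{\Omega}_{k-1}^{(x)} & \boldsymbol{\Omega}_k^{(x)}\\ \mathbf{I} & \mathbf{0} & \cdots & \mathbf{0} & \mathbf{0}\\ \mathbf{0} & \mathbf{I} & \cdots & \mathbf{0} & \mathbf{0}\\ \vdots & & \ddots & & \vdots\\ \mathbf{0} & \cdots & \mathbf{0} & \mathbf{I} & \mathbf{0}\end{bmatrix},\qquad \mathbf{C}_g=\begin{bmatrix}\boldsymbol{\Omega}_0^{(g)} & \boldsymbol{\Omega}_1^{(g)} & \cdots & \boldsymbol{\Omega}_{k-1}^{(g)} & \boldsymbol{\Omega}_k^{(g)}\\ \mathbf{I} & \mathbf{0}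 & \cdots & \mathbf{0} & \mathbf{0}\\ \mathbf{0} & \mathbf{I} & \cdots & \mathbf{0} & \mathbf{0}\\ \vdots & & \ddots & & \vdots\\ \mathbf{0} & \cdots & \mathbf{0} & \mathbf{I} & \mathbf{0}\end{bmatrix},$$ where $\mathbf{I}$ and $\mathbf{0}$ are the $D\times D$ identity and zero matrices (for $k=0$ these are just $\boldsymbol{\Omega}_0^{(x)}$ and $\boldsymbol{\Omega}_0^{(g)}$). Let $(\lambda,\mathbf{w})$ be an eigenpair of $\mathbf{C}_g$ with $\lambda\neq 0$, i.e. $\mathbf{w}\neq 0$ and $\mathbf{C}_g\mathbf{w}=\lambda\mathbf{w}$, and write $\mathbf{w}=[\mathbf{w}^0;\mathbf{w}^1;\dots;\mathbf{w}^k]$ with blocks $\mathbf{w}^j\in\mathbb{C}^D$. Set $\boldsymbol{\phi}^0=\mathbf{U}\mathbf{w}^0$ and $\boldsymbol{\phi}=[\boldsymbol{\phi}^0;\ \lambda^{-1}\boldsymbol{\phi}^0;\ \dots;\ \lambda^{-k}\boldsymbol{\phi}^0]\in\mathbb{C}^{(k+1)D}$ (blocks stacked vertically). Then $(\lambda,\boldsymbol{\phi})$ is an eigenpair of $\mathbf{C}_x$, i.e. $\boldsymbol{\phi}\neq 0$ and $\mathbf{C}_x\boldsymbol{\phi}=\lambda\boldsymbol{\phi}$.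
   Context: This is the setting of the Mori–Zwanzig modal decomposition: states evolve by the memory recursion $\mathbf{x}_{n+1}=\boldsymbol{\Omega}_0^{(x)}\mathbf{x}_n+\dots+\boldsymbol{\Omega}_k^{(x)}\mathbf{x}_{n-k}$ with linear Mori–Zwanzig operators $\boldsymbol{\Omega}_i^{(x)}$ acting on state space, and the observables are $\mathbf{g}(\mathbf{x}_n)=\mathbf{U}^*\mathbf{x}_n$ (projections onto the POD modes, i.e. left singular vectors of the snapshot matrix), which evolve by the same recursion with the operators $\boldsymbol{\Omega}_i^{(g)}=\mathbf{U}^*\boldsymbol{\Omega}_i^{(x)}\mathbf{U}$. $\mathbf{U}^*$ denotes the conjugate transpose. *)

(* Complex numbers are R[i] (mathcomp-real-closed's complex)
   over an arbitrary realType R (taking R := Stdlib reals gives C). *)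
From HB Require Import structures.
From mathcomp Require Import all_boot all_order all_algebra complex.
From mathcomp Require Import reals.
Set Implicit Arguments. Unset Strict Implicit. Unset Printing Implicit Defensive.
Import Order.TTheory GRing.Theory Num.Theory.
Local Open Scope ring_scope.

Definition ctrmx (C : numClosedFieldType) m n (A : 'M[C]_(m, n)) : 'M[C]_(n, m) :=
  (map_mx Num.conj A)^T.

Definition unitary_mx (C : numClosedFieldType) n (U : 'M[C]_n) : Prop :=
  ctrmx U *m U = 1%:M /\ U *m ctrmx U = 1%:M.

Definition is_full_svd (C : numClosedFieldType) D m (X : 'M[C]_(D, m))
    (U : 'M[C]_D) (S : 'M[C]_(D, m)) (V : 'M[C]_m) : Prop :=
  [/\ unitary_mx U, unitary_mx V,
      X = U *m S *m ctrmx V,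
      (forall (i : 'I_D) (j : 'I_m), (i : nat) <> j -> S i j = 0)
    & ((forall (i : 'I_D) (j : 'I_m), (i : nat) = j -> 0 <= S i j) /\
      (forall (i i' : 'I_D) (j j' : 'I_m), (i : nat) = j -> (i' : nat) = j' ->
           (i <= i')%N -> S i' j' <= S i j)) ].

Definition block_companion (C : numClosedFieldType) D k (Om : 'I_k.+1 -> 'M[C]_D)
  : 'M[C]_(\sum_(i < k.+1) D) :=
  \mxblock_(i < k.+1, j < k.+1)
     (if (i == 0 :> nat) then Om j
      else if ((j : nat).+1 == i) then (1%:M : 'M[C]_D) else 0).

Definition block_vec (C : numClosedFieldType) D k (b : 'I_k.+1 -> 'cV[C]_D)
  : 'cV[C]_(\sum_(i < k.+1) D) := \mxcol_(j < k.+1) b j.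

Definition vblock (C : numClosedFieldType) D k (w : 'cV[C]_(\sum_(i < k.+1) D))
  (j : 'I_k.+1) : 'cV[C]_D := submxcol w j.

From HB Require Import structures.
From mathcomp Require Import all_boot all_order all_algebra complex.
From mathcomp Require Import reals.
Set Implicit Arguments. Unset Strict Implicit. Unset Printing Implicit Defensive.
Import Order.TTheory GRing.Theory Num.Theory.
Local Open Scope ring_scope.

(* An eigenvector of a block companion matrix with nonzero eigenvalue a is
   determined by its top block v: the identity blocks force block j to be
   a^-j v, and the first block row then reduces to the single equation
   \sum_j a^-j Om_j v = a v.  This equation is preserved by the conjugation
   Om_j |-> U^* Om_j U once v is replaced by U v, because U U^* = 1. *)

Section BlockCompanion.

Variables (C : numClosedFieldType) (D k : nat).

Definition geometric_block_vec (a : C) (v : 'cV[C]_D) :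
    'cV[C]_(\sum_(i < k.+1) D) :=
  block_vec (fun j : 'I_k.+1 => a ^- j *: v).

Lemma vblockK (w : 'cV[C]_(\sum_(i < k.+1) D)) : block_vec (vblock w) = w.
Proof. exact: submxcolK. Qed.

Lemma scale_block_vec (a : C) (c : 'I_k.+1 -> 'cV[C]_D) :
  a *: block_vec c = block_vec (fun j => a *: c j).
Proof. by apply/matrixP => i j; rewrite !mxE. Qed.

Lemma geometric_block_vec_eq0 (a : C) (v : 'cV[C]_D) :
  (geometric_block_vec a v == 0) = (v == 0).
Proof.
apply/eqP/eqP => [/(congr1 (fun w => submxcol w ord0)) | ->].
  by rewrite mxcolK submxcol0 expr0 invr1 scale1r.
rewrite -(mxcol0 (p_ := fun _ : 'I_k.+1 => D)); apply: eq_mxcol => j.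
exact: scaler0.
Qed.

Variable Om : 'I_k.+1 -> 'M[C]_D.

Lemma mul_block_companion (c : 'I_k.+1 -> 'cV[C]_D) :
  block_companion Om *m block_vec c =
  block_vec (fun i : 'I_k.+1 =>
    if (i == 0 :> nat) then \sum_j Om j *m c j else c (inord i.-1)).
Proof.
rewrite /block_companion /block_vec mul_mxblock_mxrow; apply: eq_mxcol => i.
case: eqP => [// | i_neq0].
have i_pred : (i.-1 < k.+1)%N by case: i i_neq0 => [[|i]] //= /ltnW.
rewrite (bigD1 (inord i.-1)) //= big1 ?addr0.
  by rewrite inordK // prednK ?lt0n ?eqxx ?mul1mx //; apply/eqP.
move=> j /eqP j_neq; case: eqP => [ji | _]; last by rewrite mul0mx.
by exfalso; apply: j_neq; apply: val_inj; rewrite /= -ji /= inordK.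
Qed.

Variable a : C.
Hypothesis a_neq0 : a != 0.

Lemma block_companion_eigenvec_geometric (c : 'I_k.+1 -> 'cV[C]_D) :
  block_companion Om *m block_vec c = a *: block_vec c ->
  block_vec c = geometric_block_vec a (c ord0).
Proof.
rewrite mul_block_companion scale_block_vec /block_vec => /eq_mxcolP eig.
have shift n : (n < k)%N -> c (inord n.+1) = a^-1 *: c (inord n).
  move=> n_lt; have := eig (inord n.+1); rewrite inordK //= => ->.
  by rewrite scalerA mulVf // scale1r.
have geo n : (n < k.+1)%N -> c (inord n) = a ^- n *: c ord0.
  elim: n => [|n IHn] n_lt.
    by rewrite expr0 invr1 scale1r; congr c; apply: val_inj; rewrite /= inordK.
  by rewrite shift // IHn 1?ltnW // scalerA exprSr invfM mulrC.
by apply: eq_mxcol => j; rewrite -geo // inord_val.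
Qed.

Lemma block_companion_geometric_eigenP (v : 'cV[C]_D) :
  block_companion Om *m geometric_block_vec a v = a *: geometric_block_vec a v
  <-> \sum_(j < k.+1) a ^- j *: (Om j *m v) = a *: v.
Proof.
rewrite /geometric_block_vec mul_block_companion scale_block_vec /block_vec.
have head_eq :
    \sum_j Om j *m (a ^- j *: v) = \sum_(j < k.+1) a ^- j *: (Om j *m v).
  by apply: eq_bigr => j _; rewrite scalemxAr.
split=> [/eq_mxcolP /(_ ord0) | eig].
  by rewrite /= expr0 invr1 scale1r head_eq.
apply: eq_mxcol => -[[|i] i_lt] /=.
  by rewrite head_eq eig expr0 invr1 scale1r.
by rewrite inordK 1?ltnW // scalerA exprS invfM mulrA mulfV // mul1r.
Qed.

End BlockCompanion.

Lemma geometric_eigen_conj (C : numClosedFieldType) D k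
    (Om : 'I_k.+1 -> 'M[C]_D) (P Q : 'M[C]_D) (a : C) (v : 'cV[C]_D) :
  Q *m P = 1%:M ->
  \sum_(j < k.+1) a ^- j *: (P *m Om j *m Q *m v) = a *: v ->
  \sum_(j < k.+1) a ^- j *: (Om j *m (Q *m v)) = a *: (Q *m v).
Proof.
move=> QP1 /(congr1 (mulmx Q)); rewrite mulmx_sumr -scalemxAr => <-.
by apply: eq_bigr => j _; rewrite -scalemxAr !mulmxA QP1 mul1mx.
Qed.

Lemma unitary_mul_eq0 (C : numClosedFieldType) n p (U : 'M[C]_n)
    (v : 'M[C]_(n, p)) :
  unitary_mx U -> (U *m v == 0) = (v == 0).
Proof.
case=> UU1 _; apply/eqP/eqP => [Uv0 | ->]; last exact: mulmx0.
by rewrite -[v]mul1mx -UU1 -mulmxA Uv0 mulmx0.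
Qed.

Theorem theorem1 (R : realType) (D k m : nat) (hD : (1 <= D)%N)
  (X : 'M[R[i]]_(D, m)) (U : 'M[R[i]]_D) (S : 'M[R[i]]_(D, m)) (V : 'M[R[i]]_m)
  (hsvd : is_full_svd X U S V)
  (Omx : 'I_k.+1 -> 'M[R[i]]_D)
  (lambda : R[i]) (w : 'cV[R[i]]_(\sum_(j < k.+1) D))
  (hlam : lambda != 0) (hw : w != 0)
  (heig : block_companion (fun j => ctrmx U *m Omx j *m U) *m w = lambda *: w) :
  let phi0 := U *m vblock w ord0 in
  let phi := block_vec (fun j : 'I_k.+1 => lambda ^- (j : nat) *: phi0) in
  phi != 0 /\ block_companion Omx *m phi = lambda *: phi.
Proof.
case: hsvd => unitaryU _ _ _ _; have [_ UU1] := unitaryU.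
have := block_companion_eigenvec_geometric hlam (c := vblock w).
rewrite vblockK => /(_ _ heig) wE.
rewrite wE geometric_block_vec_eq0 in heig hw.
move=> phi0 phi; have -> : phi = geometric_block_vec k lambda phi0 by [].
split; first by rewrite geometric_block_vec_eq0 unitary_mul_eq0.
apply/(block_companion_geometric_eigenP _ hlam).
apply: (geometric_eigen_conj (P := ctrmx U) UU1).
exact/(block_companion_geometric_eigenP _ hlam).
Qed.
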